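(* Let $D\subset\mathbb R^3$ be an open set containing the $x_2$-axis and $E=D\cap\{x: x_1^2+x_3^2<1\}$. If $0<b<1$ and $0<a<1$, then there is a constant $C>0$ such that for every $u$ with $\|u\|^{(b,\star)}_{0,a;E}<\infty$, $$|u|^{(b)}_{a;E}\le C\,\|u\|^{(b,\star)}_{0,a;E}.$$
   Context: $r_x=\sqrt{x_1^2+x_3^2}$, $r_{x,y}=\min(r_x,r_y)$. $\|u\|^{(b,\star)}_{0,a;E}=\sup_{x\in E}r_x^{\max(b,0)}|u(x)|+\sup_{x\ne y\in E}r_{x,y}^{\max(b+a,0)}\frac{|u(x)-u(y)|}{|x-y|^a}$. For $\sigma>0$ let $E_\sigma=\{x\in E: r_x>\sigma\}$, $\|u\|_{a;E_\sigma}=\sup_{E_\sigma}|u|+\sup_{x\ne y\in E_\sigma}\frac{|u(x)-u(y)|}{|x-y|^a}$, and $|u|^{(b)}_{a;E}=\sup_{\sigma>0}\sigma^{a+b}\|u\|_{a;E_\sigma}$. *)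

From mathcomp Require Import all_boot all_order all_algebra.
From mathcomp Require Import all_classical all_reals all_analysis.
Set Implicit Arguments. Unset Strict Implicit. Unset Printing Implicit Defensive.
Import Order.TTheory GRing.Theory Num.Theory.
Local Open Scope classical_set_scope.
Local Open Scope ring_scope.

Definition pt (R : realType) := (R * R * R)%type.
Definition c1 {R : realType} (x : pt R) : R := x.1.1.
Definition c2 {R : realType} (x : pt R) : R := x.1.2.
Definition c3 {R : realType} (x : pt R) : R := x.2.

Definition edist {R : realType} (x y : pt R) : R :=
  Num.sqrt ((c1 x - c1 y) ^+ 2 + (c2 x - c2 y) ^+ 2 + (c3 x - c3 y) ^+ 2).

Definition open3 {R : realType} (D : set (pt R)) : Prop :=
  forall x, D x -> exists r : R, 0 < r /\ (forall y, edist x y < r -> D y).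

Definition rr {R : realType} (x : pt R) : R := Num.sqrt (c1 x ^+ 2 + c3 x ^+ 2).
Definition rmin {R : realType} (x y : pt R) : R := Num.min (rr x) (rr y).

(* Supremum of a family of nonnegative quantities, with sup of the empty set = 0 *)
Definition sup0 {R : realType} (S : set (\bar R)) : \bar R :=
  ereal_sup (S `|` [set 0%E]).

Definition star_norm {R : realType} (b a : R) (E : set (pt R)) (u : pt R -> R)
  : \bar R :=
  (sup0 [set ((rr x) `^ (Num.max b 0) * `|u x|)%:E | x in E]
   + sup0 [set ((rmin xy.1 xy.2) `^ (Num.max (b + a) 0)
                 * (`|u xy.1 - u xy.2| / (edist xy.1 xy.2) `^ a))%:E
          | xy in [set xy : pt R * pt R | E xy.1 /\ E xy.2 /\ xy.1 <> xy.2]])%E.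

Definition Esig {R : realType} (E : set (pt R)) (s : R) : set (pt R) :=
  [set x | E x /\ s < rr x].

Definition holder_norm {R : realType} (a : R) (F : set (pt R)) (u : pt R -> R)
  : \bar R :=
  (sup0 [set (`|u x|)%:E | x in F]
   + sup0 [set (`|u xy.1 - u xy.2| / (edist xy.1 xy.2) `^ a)%:E
          | xy in [set xy : pt R * pt R | F xy.1 /\ F xy.2 /\ xy.1 <> xy.2]])%E.

Definition weighted_holder {R : realType} (b a : R) (E : set (pt R))
  (u : pt R -> R) : \bar R :=
  sup0 [set ((s `^ (a + b))%:E * holder_norm a (Esig E s) u)%E | s in [set s : R | 0 < s]].

(* Every point of E has r_x < 1, so for 0 < σ only σ < 1 matters, where
   σ^(a+b) <= σ^b <= r_x^b on E_σ; and for two points of E_σ we have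
   σ < r_{x,y}, hence σ^(a+b) <= r_{x,y}^(a+b). Each weighted term of
   σ^(a+b) ||u||_{a;E_σ} is thus dominated by a term of the star norm,
   and the inequality holds with C = 1. *)
From Pilot Require Import Defs.
From mathcomp Require Import all_boot all_order all_algebra.
From mathcomp Require Import all_classical all_reals all_analysis.
Import Order.TTheory GRing.Theory Num.Theory.
Local Open Scope classical_set_scope.
Local Open Scope ring_scope.

Section Sup0.
Context {R : realType}.
Local Open Scope ereal_scope.

Lemma sup0_ge0 (S : set (\bar R)) : 0 <= Defs.sup0 S.
Proof. by apply: ereal_sup_ubound; right. Qed.

Lemma sup0_ub (S : set (\bar R)) x : S x -> x <= Defs.sup0 S.
Proof. by move=> Sx; apply: ereal_sup_ubound; left. Qed.

Lemma ge_sup0Zl (k : R) (S : set (\bar R)) M : (0 <= k)%R -> 0 <= M ->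
  (forall x, S x -> k%:E * x <= M) -> k%:E * Defs.sup0 S <= M.
Proof.
move=> k0 M0 kSM; rewrite /sup0 -ereal_supZl //.
  by apply: ge_ereal_sup => _ [x [Sx|->] <-]; [exact: kSM | rewrite mule0].
by apply/set0P; exists 0; right.
Qed.

End Sup0.

Lemma le_powR_weight {R : realType} (s r b c : R) :
  0 < s <= 1 -> s <= r -> 0 <= b <= c -> s `^ c <= r `^ b.
Proof.
move=> s01 sr /andP[b0 bc]; have /andP[s0 _] := s01.
apply: (@le_trans _ _ (s `^ b)); first exact: ger_powR.
have r0 : 0 <= r := le_trans (ltW s0) sr.
by apply: ge0_ler_powR; rewrite // nnegrE ltW.
Qed.

Section WeightedHolderStar.
Context {R : realType} (a b : R) (E : set (pt R)) (u : pt R -> R).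
Hypotheses (a0 : 0 <= a) (b0 : 0 <= b) (rrE : forall x, E x -> rr x < 1).
Let maxb : Num.max b 0 = b. Proof. exact: max_l. Qed.
Let maxba : Num.max (b + a) 0 = b + a. Proof. by rewrite max_l // addr_ge0. Qed.

Lemma star_norm_ge0 : (0 <= star_norm b a E u)%E.
Proof. by rewrite /star_norm adde_ge0 // sup0_ge0. Qed.

Lemma weighted_sup_le_star (s : R) : 0 < s ->
  ((s `^ (a + b))%:E * Defs.sup0 [set `|u x|%:E | x in Esig E s] <=
   Defs.sup0 [set (rr x `^ Num.max b 0 * `|u x|)%:E | x in E])%E.
Proof.
move=> s0; apply: ge_sup0Zl; rewrite ?powR_ge0 ?sup0_ge0 //.
move=> _ [x [Ex sx] <-]; apply: le_trans; last by apply: sup0_ub; exists x.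
rewrite -EFinM lee_fin maxb ler_wpM2r // le_powR_weight //.
- by rewrite s0 ltW // (lt_trans sx (rrE _ Ex)).
- exact: ltW.
- by rewrite b0 lerDr.
Qed.

Lemma weighted_seminorm_le_star (s : R) : 0 < s ->
  ((s `^ (a + b))%:E *
     Defs.sup0 [set (`|u xy.1 - u xy.2| / (Defs.edist xy.1 xy.2) `^ a)%:E
       | xy in [set xy | Esig E s xy.1 /\ Esig E s xy.2 /\ xy.1 <> xy.2]] <=
   Defs.sup0 [set (rmin xy.1 xy.2 `^ Num.max (b + a) 0 *
                (`|u xy.1 - u xy.2| / (Defs.edist xy.1 xy.2) `^ a))%:E
       | xy in [set xy | E xy.1 /\ E xy.2 /\ xy.1 <> xy.2]])%E.
Proof.
move=> s0; apply: ge_sup0Zl; rewrite ?powR_ge0 ?sup0_ge0 //.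
move=> _ [xy [[Ex1 sx1] [[Ex2 sx2] xy12]] <-].
apply: le_trans; last by apply: sup0_ub; exists xy.
have s_rmin : s < rmin xy.1 xy.2 by rewrite /rmin lt_min sx1 sx2.
rewrite -EFinM lee_fin maxba ler_wpM2r ?divr_ge0 ?powR_ge0 //.
rewrite addrC le_powR_weight //.
- by rewrite s0 ltW // (lt_trans sx1 (rrE _ Ex1)).
- exact: ltW.
- by rewrite addr_ge0 ?lexx.
Qed.

Lemma weighted_holder_le_star : (weighted_holder b a E u <= star_norm b a E u)%E.
Proof.
apply: ge_ereal_sup => _ [[s s0 <-]|->]; last exact: star_norm_ge0.
rewrite /holder_norm ge0_muleDr ?sup0_ge0 //.
by apply: leeD; [exact: weighted_sup_le_star | exact: weighted_seminorm_le_star].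
Qed.

End WeightedHolderStar.

Theorem lemma2p2 (R : realType) (D : set (pt R)) (a b : R) :
  open3 D ->
  (forall t : R, D (0, t, 0)) ->
  0 < b < 1 -> 0 < a < 1 ->
  let E := [set x | D x /\ c1 x ^+ 2 + c3 x ^+ 2 < 1] in
  exists C : R, 0 < C /\
    forall u : pt R -> R,
      (star_norm b a E u < +oo)%E ->
      (weighted_holder b a E u <= C%:E * star_norm b a E u)%E.
Proof.
move=> _ _ /andP[b0 _] /andP[a0 _] E; exists 1; split => // u _.
rewrite mul1e; apply: weighted_holder_le_star; rewrite ?ltW // => x [_ x1].
by rewrite /rr -sqrtr1 ltr_sqrt.
Qed.
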